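(* Let $(b_1,b_2)$ and $(\tilde b_1,\tilde b_2)$ be real pairs with $b_1\ne1$, $\tilde b_1\ne1$, $(b_1,b_2)\ne(0,0)$, $(\tilde b_1,\tilde b_2)\ne(0,0)$. Then $\Gamma_c^2(b_1,b_2)$ is linearly equivalent to $\Gamma_c^2(\tilde b_1,\tilde b_2)$ if and only if $b_1=\tilde b_1$ and $b_2=\pm\tilde b_2$. Moreover the Ricci tensor of $\Gamma_c^2(b_1,b_2)$ is positive definite if $b_1>1$ and indefinite if $b_1<1$.
   Context: A torsion-free connection has Christoffel symbols $\nabla_{\partial_{x^i}}\partial_{x^j}=\Gamma_{ij}^k\partial_{x^k}$; curvature $R(X,Y)Z=\nabla_X\nabla_YZ-\nabla_Y\nabla_XZ-\nabla_{[X,Y]}Z$, Ricci tensor $\rho(Y,Z)=\mathrm{Tr}(X\mapsto R(X,Y)Z)$. For real constants, $\Gamma(a,b,c,d,e,f)$ denotes the connection on $\mathbb R^2$ with constant Christoffel symbols $\Gamma_{11}^1=a$, $\Gamma_{11}^2=b$, $\Gamma_{12}^1=\Gamma_{21}^1=c$, $\Gamma_{12}^2=\Gamma_{21}^2=d$, $\Gamma_{22}^1=e$, $\Gamma_{22}^2=f$. For $b_1\ne1$, $\Gamma_c^2(b_1,b_2):=\Gamma(1+b_1,0,b_2,1,\frac{1+b_2^2}{b_1-1},0)$. Two such connections are linearly equivalent if there is $T\in GL(2,\mathbb R)$ with $T^*\nabla_2=\nabla_1$. *)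

From Stdlib Require Import Reals Lra.
Open Scope R_scope.

Inductive idx : Set := I1 | I2.

Definition sum2 (f : idx -> R) : R := f I1 + f I2.

(* Constant Christoffel symbols: chr G i j k = Gamma_{ij}^k. *)
Definition chr := idx -> idx -> idx -> R.

Definition Gam (a b c d e f : R) : chr := fun i j k =>
  match i, j, k with
  | I1, I1, I1 => a
  | I1, I1, I2 => b
  | I1, I2, I1 => c
  | I2, I1, I1 => c
  | I1, I2, I2 => d
  | I2, I1, I2 => d
  | I2, I2, I1 => e
  | I2, I2, I2 => f
  end.

Definition Gc2 (b1 b2 : R) : chr :=
  Gam (1 + b1) 0 b2 1 ((1 + b2 ^ 2) / (b1 - 1)) 0.

(* A linear map T of R^2, given by its matrix: mat T a i = T^a_i,
   i.e. T(d_i) = sum_a T^a_i d_a. *)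
Record lin2 := { t11 : R; t12 : R; t21 : R; t22 : R }.

Definition mat (T : lin2) : idx -> idx -> R := fun a i =>
  match a, i with
  | I1, I1 => t11 T | I1, I2 => t12 T
  | I2, I1 => t21 T | I2, I2 => t22 T
  end.

Definition det2 (T : lin2) : R := t11 T * t22 T - t12 T * t21 T.

(* Inverse matrix (meaningful when det2 T <> 0). *)
Definition matinv (T : lin2) : idx -> idx -> R := fun a i =>
  match a, i with
  | I1, I1 => t22 T / det2 T | I1, I2 => - t12 T / det2 T
  | I2, I1 => - t21 T / det2 T | I2, I2 => t11 T / det2 T
  end.

(* Christoffel symbols of the pulled-back connection T^* nabla, where
   (T^* nabla)_X Y = T^{-1}_* (nabla_{T_* X} T_* Y):
   (T^*G)_{ij}^k = sum_{a,b,c} T^a_i T^b_j G_{ab}^c (T^{-1})^k_c. *)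
Definition pullback (T : lin2) (G : chr) : chr := fun i j k =>
  sum2 (fun a => sum2 (fun b => sum2 (fun c =>
    mat T a i * mat T b j * G a b c * matinv T k c))).

Definition lin_equiv (G1 G2 : chr) : Prop :=
  exists T : lin2, det2 T <> 0 /\ forall i j k, pullback T G2 i j k = G1 i j k.

(* Curvature for constant Christoffel symbols (all derivatives vanish):
   R(d_i,d_j)d_k = sum_m curv G i j k m d_m. *)
Definition curv (G : chr) (i j k m : idx) : R :=
  sum2 (fun l => G j k l * G i l m - G i k l * G j l m).

(* Ricci tensor rho(d_j, d_k) = Tr(X |-> R(X,d_j)d_k). *)
Definition ricci (G : chr) (j k : idx) : R := sum2 (fun i => curv G i j k i).

Definition vec2 (v1 v2 : R) : idx -> R := fun i =>
  match i with I1 => v1 | I2 => v2 end.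

Definition qform (B : idx -> idx -> R) (v : idx -> R) : R :=
  sum2 (fun j => sum2 (fun k => B j k * v j * v k)).

Definition pos_def (B : idx -> idx -> R) : Prop :=
  forall v1 v2 : R, (v1, v2) <> (0, 0) -> qform B (vec2 v1 v2) > 0.

Definition indefinite (B : idx -> idx -> R) : Prop :=
  (exists v1 v2 : R, qform B (vec2 v1 v2) > 0) /\
  (exists w1 w2 : R, qform B (vec2 w1 w2) < 0).

From Stdlib Require Import Reals Lra.
Open Scope R_scope.

(* The Ricci form of Gamma_c^2(b1,b2) has leading entry b1 and discriminant
   (b1^2 + b2^2)/(b1 - 1), so Sylvester's criterion settles its signature.
   A linear equivalence T^* nabla_2 = nabla_1 amounts to
   T (Gamma_1(u,v)) = Gamma_2(T u, T v).  At u = v = e_1, with T e_1 = (p, r),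
   the second component gives 2 p r = (1 + b1) r; if r <> 0 the first one then
   says that the quadratic form (c1 - 1) x^2 + 2 c2 x y + e y^2, with
   e = (1 + c2^2)/(c1 - 1), vanishes at (p, r).  That form has discriminant 1,
   hence is anisotropic, so T is upper triangular, and the remaining equations
   force T = diag(1, +-1). *)

Lemma qform_vec2 (B : idx -> idx -> R) (x y : R) :
  qform B (vec2 x y) = B I1 I1 * x ^ 2 + (B I1 I2 + B I2 I1) * x * y + B I2 I2 * y ^ 2.
Proof. unfold qform, sum2, vec2; ring. Qed.

Lemma pos_def_of_minors (B : idx -> idx -> R) :
  B I1 I2 = B I2 I1 -> 0 < B I1 I1 -> 0 < B I1 I1 * B I2 I2 - B I1 I2 ^ 2 -> pos_def B.
Proof.
  intros Hsym Ha Hdet x y Hxy; rewrite qform_vec2, <- Hsym.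
  set (a := B I1 I1) in *; set (b := B I1 I2) in *; set (c := B I2 I2) in *.
  assert (Hsq : a * (a * x ^ 2 + (b + b) * x * y + c * y ^ 2)
                = (a * x + b * y) ^ 2 + (a * c - b ^ 2) * y ^ 2) by ring.
  destruct (Req_dec y 0) as [-> | Hy].
  - assert (x <> 0) by (intros ->; apply Hxy; reflexivity).
    assert (0 < x ^ 2) by (rewrite <- Rsqr_pow2; apply Rsqr_pos_lt; assumption).
    nra.
  - assert (0 < y ^ 2) by (rewrite <- Rsqr_pow2; apply Rsqr_pos_lt; assumption).
    assert (0 <= (a * x + b * y) ^ 2) by apply pow2_ge_0.
    nra.
Qed.

Lemma indefinite_of_qform_mul_neg (B : idx -> idx -> R) (u1 u2 v1 v2 : R) :
  qform B (vec2 u1 u2) * qform B (vec2 v1 v2) < 0 -> indefinite B.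
Proof.
  set (qu := qform B (vec2 u1 u2)); set (qv := qform B (vec2 v1 v2)); intros Hneg.
  destruct (Rtotal_order qu 0) as [Hu | [Hu | Hu]].
  - split; [exists v1, v2 | exists u1, u2]; fold qu qv; nra.
  - rewrite Hu in Hneg; lra.
  - split; [exists u1, u2 | exists v1, v2]; fold qu qv; nra.
Qed.

Lemma indefinite_of_det_neg (B : idx -> idx -> R) :
  B I1 I2 = B I2 I1 -> B I1 I1 * B I2 I2 - B I1 I2 ^ 2 < 0 -> indefinite B.
Proof.
  intros Hsym Hdet.
  set (a := B I1 I1) in *; set (b := B I1 I2) in *; set (c := B I2 I2) in *.
  destruct (Req_dec a 0) as [Ha | Ha].
  - (* for a = 0 the form is y (2 b x + c y), taking the values 4 b^2 and -4 b^2 *)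
    apply (indefinite_of_qform_mul_neg B (1 - c) (2 * b) (-1 - c) (2 * b)).
    rewrite !qform_vec2, <- Hsym; fold a b c; rewrite Ha.
    assert (0 < b ^ 2) by nra.
    replace ((0 * (1 - c) ^ 2 + (b + b) * (1 - c) * (2 * b) + c * (2 * b) ^ 2) *
             (0 * (-1 - c) ^ 2 + (b + b) * (-1 - c) * (2 * b) + c * (2 * b) ^ 2))
      with (- 16 * (b ^ 2) ^ 2) by ring.
    nra.
  - apply (indefinite_of_qform_mul_neg B 1 0 (- b) a).
    rewrite !qform_vec2, <- Hsym; fold a b c.
    replace ((a * 1 ^ 2 + (b + b) * 1 * 0 + c * 0 ^ 2) *
             (a * (- b) ^ 2 + (b + b) * (- b) * a + c * a ^ 2))
      with (a ^ 2 * (a * c - b ^ 2)) by ring.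
    assert (0 < a ^ 2) by (rewrite <- Rsqr_pow2; apply Rsqr_pos_lt; assumption).
    nra.
Qed.

Lemma ricci_Gc2 (b1 b2 : R) :
  ricci (Gc2 b1 b2) I1 I1 = b1 /\
  ricci (Gc2 b1 b2) I1 I2 = b2 /\
  ricci (Gc2 b1 b2) I2 I1 = b2 /\
  ricci (Gc2 b1 b2) I2 I2 = (1 + b2 ^ 2) / (b1 - 1) * b1 - b2 ^ 2.
Proof. unfold ricci, curv, sum2, Gc2, Gam; repeat split; ring. Qed.

Lemma ricci_Gc2_det (b1 b2 : R) : b1 <> 1 ->
  ricci (Gc2 b1 b2) I1 I1 * ricci (Gc2 b1 b2) I2 I2 - ricci (Gc2 b1 b2) I1 I2 ^ 2
  = (b1 ^ 2 + b2 ^ 2) / (b1 - 1).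
Proof.
  intros Hb1; destruct (ricci_Gc2 b1 b2) as (-> & -> & _ & ->).
  field; lra.
Qed.

Lemma pullback_transport (T : lin2) (G1 G2 : chr) :
  det2 T <> 0 -> (forall i j k, pullback T G2 i j k = G1 i j k) ->
  forall i j c, sum2 (fun a => sum2 (fun b => mat T a i * mat T b j * G2 a b c)) =
                sum2 (fun k => G1 i j k * mat T c k).
Proof.
  intros Hdet Hpull i j c.
  unfold sum2 at 3; rewrite <- (Hpull i j I1), <- (Hpull i j I2).
  destruct T as [p q r w]; unfold det2 in Hdet; simpl in Hdet.
  destruct i, j, c; unfold pullback, sum2, mat, matinv, det2; simpl; field; exact Hdet.
Qed.

Definition diag2 (s : R) : lin2 := {| t11 := 1; t12 := 0; t21 := 0; t22 := s |}.

Lemma lin_equiv_Gc2_sign (c1 c2 s : R) : c1 <> 1 -> s = 1 \/ s = -1 ->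
  lin_equiv (Gc2 c1 (s * c2)) (Gc2 c1 c2).
Proof.
  intros Hc1 Hs; exists (diag2 s).
  split; [unfold det2, diag2; simpl; destruct Hs; lra |].
  intros i j k; destruct Hs as [-> | ->];
    destruct i, j, k; unfold pullback, sum2, mat, matinv, det2, diag2, Gc2, Gam; simpl;
    field; lra.
Qed.

Lemma Gc2_form_anisotropic (c1 c2 x y : R) : c1 <> 1 ->
  (c1 - 1) * x ^ 2 + 2 * c2 * x * y + (1 + c2 ^ 2) / (c1 - 1) * y ^ 2 = 0 -> y = 0.
Proof.
  intros Hc1 Hq.
  assert (Hsq : ((c1 - 1) * x + c2 * y) ^ 2 + y ^ 2 = 0).
  { transitivity ((c1 - 1) * ((c1 - 1) * x ^ 2 + 2 * c2 * x * y
                              + (1 + c2 ^ 2) / (c1 - 1) * y ^ 2)).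
    - field; lra.
    - rewrite Hq; ring. }
  assert (0 <= ((c1 - 1) * x + c2 * y) ^ 2) by apply pow2_ge_0.
  assert (0 <= y ^ 2) by apply pow2_ge_0.
  nra.
Qed.

Lemma lin_equiv_Gc2_inv (b1 b2 c1 c2 : R) : b1 <> 1 -> c1 <> 1 ->
  lin_equiv (Gc2 b1 b2) (Gc2 c1 c2) -> b1 = c1 /\ (b2 = c2 \/ b2 = - c2).
Proof.
  intros Hb1 Hc1 [T [Hdet Hpull]].
  pose proof (pullback_transport T _ _ Hdet Hpull) as E.
  destruct T as [p q r w]; unfold det2 in Hdet; cbn in Hdet.
  unfold Gc2 in E.
  set (e1 := (1 + b2 ^ 2) / (b1 - 1)) in E.
  set (e2 := (1 + c2 ^ 2) / (c1 - 1)) in E.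
  assert (Hq : e2 * (c1 - 1) = 1 + c2 ^ 2) by (unfold e2; field; lra).
  assert (E111 : (1 + c1) * p ^ 2 + 2 * c2 * p * r + e2 * r ^ 2 = (1 + b1) * p)
    by (generalize (E I1 I1 I1); unfold sum2, mat, Gam; cbn; lra).
  assert (E112 : 2 * p * r = (1 + b1) * r)
    by (generalize (E I1 I1 I2); unfold sum2, mat, Gam; cbn; lra).
  assert (E121 : (1 + c1) * p * q + c2 * (p * w + q * r) + e2 * r * w = b2 * p + q)
    by (generalize (E I1 I2 I1); unfold sum2, mat, Gam; cbn; lra).
  assert (E122 : p * w + q * r = b2 * r + w)
    by (generalize (E I1 I2 I2); unfold sum2, mat, Gam; cbn; lra).
  assert (E221 : (1 + c1) * q ^ 2 + 2 * c2 * q * w + e2 * w ^ 2 = e1 * p)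
    by (generalize (E I2 I2 I1); unfold sum2, mat, Gam; cbn; lra).
  assert (E222 : 2 * q * w = e1 * r)
    by (generalize (E I2 I2 I2); unfold sum2, mat, Gam; cbn; lra).
  clear E Hpull.
  assert (Hr : r = 0).
  { destruct (Req_dec r 0) as [| Hr]; [assumption |].
    apply (Gc2_form_anisotropic c1 c2 p r Hc1); fold e2.
    assert (Hb1p : 1 + b1 = 2 * p) by (apply (Rmult_eq_reg_r r); lra).
    rewrite Hb1p in E111; lra. }
  subst r.
  assert (Hw : w <> 0) by (intros ->; apply Hdet; ring).
  assert (Hp : p = 1) by (apply (Rmult_eq_reg_r w); lra).
  subst p.
  assert (Hq0 : q = 0) by (apply (Rmult_eq_reg_r w); lra).
  subst q.
  assert (Hbc : b1 = c1) by lra.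
  subst b1.
  assert (Hb2 : b2 = w * c2) by lra.
  assert (Hw2 : w ^ 2 = 1).
  { assert (He1 : e1 * (c1 - 1) = 1 + b2 ^ 2) by (unfold e1; field; lra).
    rewrite Rmult_1_r in E221; rewrite <- E221, Hb2 in He1.
    replace ((1 + c1) * 0 ^ 2 + 2 * c2 * 0 * w + e2 * w ^ 2) with (w ^ 2 * e2) in He1 by ring.
    rewrite Rmult_assoc, Hq in He1; lra. }
  split; [reflexivity |].
  assert (Hsign : (w - 1) * (w + 1) = 0) by lra.
  destruct (Rmult_integral _ _ Hsign) as [Hw1 | Hw1];
    [left; replace w with 1 in Hb2 by lra | right; replace w with (-1) in Hb2 by lra];
    lra.
Qed.

Lemma ricci_Gc2_pos_def (b1 b2 : R) : b1 > 1 -> pos_def (ricci (Gc2 b1 b2)).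
Proof.
  intros Hb1; destruct (ricci_Gc2 b1 b2) as (H11 & H12 & H21 & _).
  apply pos_def_of_minors; [congruence | lra |].
  rewrite ricci_Gc2_det by lra.
  apply Rdiv_lt_0_compat; nra.
Qed.

Lemma ricci_Gc2_indefinite (b1 b2 : R) : (b1, b2) <> (0, 0) -> b1 < 1 ->
  indefinite (ricci (Gc2 b1 b2)).
Proof.
  intros Hb Hb1; destruct (ricci_Gc2 b1 b2) as (_ & H12 & H21 & _).
  apply indefinite_of_det_neg; [congruence |].
  rewrite ricci_Gc2_det by lra.
  apply Rdiv_pos_neg; [| lra].
  destruct (Req_dec b1 0) as [-> | Hb10].
  - assert (b2 <> 0) by (intros ->; apply Hb; reflexivity).
    assert (0 < b2 ^ 2) by (rewrite <- Rsqr_pow2; apply Rsqr_pos_lt; assumption).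
    lra.
  - assert (0 < b1 ^ 2) by (rewrite <- Rsqr_pow2; apply Rsqr_pos_lt; assumption).
    assert (0 <= b2 ^ 2) by apply pow2_ge_0.
    lra.
Qed.

Theorem mainTheorem16 (b1 b2 c1 c2 : R)
  (hb1 : b1 <> 1) (hc1 : c1 <> 1)
  (hb : (b1, b2) <> (0, 0)) (hc : (c1, c2) <> (0, 0)) :
  (lin_equiv (Gc2 b1 b2) (Gc2 c1 c2) <-> (b1 = c1 /\ (b2 = c2 \/ b2 = - c2))) /\
  (b1 > 1 -> pos_def (ricci (Gc2 b1 b2))) /\
  (b1 < 1 -> indefinite (ricci (Gc2 b1 b2))).
Proof.
  split; [split |].
  - apply lin_equiv_Gc2_inv; assumption.
  - intros [-> [-> | ->]].
    + rewrite <- (Rmult_1_l c2) at 1; apply lin_equiv_Gc2_sign; [assumption | left; reflexivity].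
    + replace (- c2) with (-1 * c2) by ring.
      apply lin_equiv_Gc2_sign; [assumption | right; reflexivity].
  - split; [apply ricci_Gc2_pos_def | apply ricci_Gc2_indefinite; assumption].
Qed.
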